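(* Assume the standing assumptions. Let $\bar u$ be a local solution of (P) with radius $\rho>0$, let $\epsilon_k>0$ with $\epsilon_k\to0$, let $u_k$ be a global solution of $\min\{\Phi_{\epsilon_k}(u)+\frac12\|u-\bar u\|_{L^2(\Omega)}^2:\ u\in V,\ \|u-\bar u\|_V\le\rho\}$, and let $\lambda_k\in V^*$, $\langle\lambda_k,v\rangle_{V^*,V}:=\int_\Omega 2u_k\psi_{\epsilon_k}'(u_k^2)v\,dx$. Suppose $u_k\to\bar u$ in $V$ and $\lambda_k\to\bar\lambda$ in $V^*$. Then \[ \langle\lambda_k,u_k\rangle_{V^*,V}\to\langle\bar\lambda,\bar u\rangle_{V^*,V}=p\int_\Omega|\bar u|^p\,dx . \]
   Context: Standing assumptions: $\Omega\subset\mathbb R^d$ bounded Lipschitz domain; $V$ real Hilbert space with inner product $\langle\cdot,\cdot\rangle_V$, $V\subset L^2(\Omega)$ with compact and dense embedding; $V^*$ dual with pairing $\langle\cdot,\cdot\rangle_{V^*,V}$. $F:V\to\mathbb R$ weakly lower semicontinuous, bounded below by an affine function, continuously Fréchet differentiable. $\alpha>0$, $\beta>0$, $p\in(0,1)$. For $\epsilon>0$, $\psi_\epsilon(t)=\frac p2\frac{t}{\epsilon^{2-p}}+(1-\frac p2)\epsilon^p$ if $t\in[0,\epsilon^2)$ and $\psi_\epsilon(t)=t^{p/2}$ if $t\ge\epsilon^2$, with $\psi_\epsilon'(t)=\frac p2\min(\epsilon^{p-2},t^{(p-2)/2})$; $\psi_0(t)=t^{p/2}$. $G_\epsilon(u):=\int_\Omega\psi_\epsilon(|u|^2)\,dx$,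 $\Phi_\epsilon(u):=F(u)+\frac\alpha2\|u\|_V^2+\beta G_\epsilon(u)$ for $\epsilon\ge0$. (P) is $\min_{u\in V}\Phi_0(u)$; $\bar u$ is a local solution with radius $\rho$ if $\Phi_0(\bar u)\le\Phi_0(u)$ whenever $\|u-\bar u\|_V\le\rho$. *)

From HB Require Import structures.
From mathcomp Require Import all_boot all_order all_algebra.
From mathcomp Require Import all_classical all_reals all_analysis.
Set Implicit Arguments. Unset Strict Implicit. Unset Printing Implicit Defensive.
Import Order.TTheory GRing.Theory Num.Theory.
Import numFieldNormedType.Exports.
Local Open Scope classical_set_scope.
Local Open Scope ring_scope.

Section Euclid.
Variables (R : realType) (d : nat).

Definition box (a b : 'rV[R]_d) : set 'rV[R]_d :=
  [set x | forall i, a ord0 i < x ord0 i <= b ord0 i].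
Definition boxes : set (set 'rV[R]_d) := [set box a b | a in setT & b in setT].

(* R^d equipped with the sigma-algebra generated by boxes (= Borel sets) *)
Definition Rd : measurableType _ := g_sigma_algebraType boxes.

(* mu is Lebesgue measure: it gives boxes their volume (this determines
   mu uniquely on the Borel sets) *)
Definition is_lebesgue (mu : {measure set Rd -> \bar R}) : Prop :=
  forall a b : 'rV[R]_d, (forall i, a ord0 i <= b ord0 i) ->
    mu (box a b) = (\prod_(i < d) (b ord0 i - a ord0 i))%:E.

(* bounded Lipschitz domain: open, bounded, and near every boundary point
   it lies (after a rigid motion) below the graph of a Lipschitz function *)
Definition bounded_lipschitz_domain (O : set 'rV[R]_d) : Prop :=
  open O /\
  (exists M : R, forall x, O x -> `|x| <= M) /\
  (forall x, closure O x -> ~ O x ->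
     exists r : R, 0 < r /\
     exists Q : 'M[R]_d, Q *m Q^T = 1%:M /\
     exists j : 'I_d, exists g : 'rV[R]_d -> R, exists L : R,
       (forall z z' : 'rV[R]_d, `|g z - g z'| <= L * `|z - z'|) /\
       (forall z z' : 'rV[R]_d, (forall i, i != j -> z ord0 i = z' ord0 i) -> g z = g z') /\
       (forall y : 'rV[R]_d, `|y - x| < r ->
          (O y <-> ((y - x) *m Q) ord0 j < g ((y - x) *m Q)))).
End Euclid.

Section Hilbert.
Variables (R : realType) (V : lmodType R) (ip : V -> V -> R).

Definition vnorm (v : V) : R := Num.sqrt (ip v v).

Definition is_hilbert : Prop :=
  (forall u v, ip u v = ip v u) /\
  (forall a u v w, ip (a *: u + v) w = a * ip u w + ip v w) /\
  (forall v, v != 0 -> 0 < ip v v) /\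
  (forall s : nat -> V,
     (forall e : R, 0 < e -> exists N, forall m n, (N <= m)%N -> (N <= n)%N ->
        vnorm (s m - s n) < e) ->
     exists l : V, (fun n => vnorm (s n - l)) @ \oo --> (0 : R)).

Definition in_dual (f : V -> R) : Prop :=
  (forall a u v, f (a *: u + v) = a * f u + f v) /\
  (exists C : R, forall v, `|f v| <= C * vnorm v).

Definition dual_cvg (f : nat -> V -> R) (g : V -> R) : Prop :=
  forall e : R, 0 < e -> exists N, forall k, (N <= k)%N ->
    forall v, `|f k v - g v| <= e * vnorm v.

Definition weakly_lsc (F : V -> R) : Prop :=
  forall v (c : R), c < F v ->
    exists (ls : seq (V -> R)) (delta : R),
      (forall l, l \in ls -> in_dual l) /\ 0 < delta /\
      forall u, (forall l, l \in ls -> `|l (u - v)| < delta) -> c < F u.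

Definition bounded_below_affine (F : V -> R) : Prop :=
  exists (l : V -> R) (c : R), in_dual l /\ forall u, l u + c <= F u.

Definition C1_frechet (F : V -> R) : Prop :=
  exists DF : V -> V -> R,
    (forall u, in_dual (DF u)) /\
    (forall u (e : R), 0 < e -> exists delta : R, 0 < delta /\
       forall h, vnorm h < delta ->
         `|F (u + h) - F u - DF u h| <= e * vnorm h) /\
    (forall u (e : R), 0 < e -> exists delta : R, 0 < delta /\
       forall w, vnorm (w - u) < delta ->
         forall h, `|DF w h - DF u h| <= e * vnorm h).
End Hilbert.

Section Embedding.
Variables (R : realType) (d : nat) (mu : {measure set (Rd R d) -> \bar R})
  (O : set (Rd R d)).

Definition L2 (f : Rd R d -> R) : Prop :=
  measurable_fun O f /\ mu.-integrable O (fun x => (f x ^+ 2)%:E).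

Definition L2norm2 (f : Rd R d -> R) : R := \int[mu]_(x in O) (f x ^+ 2).

Variables (V : lmodType R) (ip : V -> V -> R) (iota : V -> Rd R d -> R).

Definition compact_dense_embedding : Prop :=
  (forall v, L2 (iota v)) /\
  (forall a u v x, iota (a *: u + v) x = a * iota u x + iota v x) /\
  (forall v, L2norm2 (iota v) = 0 -> v = 0) /\
  (exists C : R, forall v, L2norm2 (iota v) <= C * (vnorm ip v) ^+ 2) /\
  (forall s : nat -> V, (exists M : R, forall n, vnorm ip (s n) <= M) ->
     exists (phi : nat -> nat) (f : Rd R d -> R),
       (forall n m, (n < m)%N -> (phi n < phi m)%N) /\ L2 f /\
       (fun n => L2norm2 (fun x => iota (s (phi n)) x - f x)) @ \oo --> (0 : R)) /\
  (forall f, L2 f -> forall e : R, 0 < e ->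
     exists v, L2norm2 (fun x => iota v x - f x) < e).

Variable (p : R).
Definition psi (eps t : R) : R :=
  if (0 < eps) && (t < eps ^+ 2)
  then p / 2 * t / eps `^ (2 - p) + (1 - p / 2) * eps `^ p
  else t `^ (p / 2).
Definition dpsi (eps t : R) : R :=
  if t < eps ^+ 2 then p / 2 * eps `^ (p - 2)
  else p / 2 * t `^ ((p - 2) / 2).

Definition Geps (eps : R) (u : V) : R :=
  \int[mu]_(x in O) psi eps (iota u x ^+ 2).

Variables (F : V -> R) (alpha beta : R).
Definition Phi (eps : R) (u : V) : R :=
  F u + alpha / 2 * (vnorm ip u) ^+ 2 + beta * Geps eps u.

Definition local_solution (ubar : V) (rho : R) : Prop :=
  forall u, vnorm ip (u - ubar) <= rho -> Phi 0 ubar <= Phi 0 u.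

Definition reg_global_solution (eps : R) (ubar : V) (rho : R) (u : V) : Prop :=
  vnorm ip (u - ubar) <= rho /\
  forall w, vnorm ip (w - ubar) <= rho ->
    Phi eps u + 1 / 2 * L2norm2 (fun x => iota u x - iota ubar x)
    <= Phi eps w + 1 / 2 * L2norm2 (fun x => iota w x - iota ubar x).

Definition lam (eps : R) (u : V) (v : V) : R :=
  \int[mu]_(x in O) (2 * iota u x * dpsi eps (iota u x ^+ 2) * iota v x).
End Embedding.

(* The pairing <lambda_k, u_k> is the integral of h_(eps_k)(u_k), where
   h_eps(y) = 2 y psi_eps'(y^2) y, and it has two limits.  Since lambda_k -> lbar
   in V^* and u_k -> ubar in V, it tends to <lbar, ubar>.  On the other hand
   |h_eps(y) - p |y|^p| <= p eps^p pointwise, and for every dl > 0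
   | |a|^p - |b|^p | <= |a - b|^p <= dl^p + dl^(p-2) |a - b|^2;  integrating over
   the bounded, hence finite-measure, domain and using
   ||u_k - ubar||_(L^2) <= C ||u_k - ubar||_V -> 0 shows that it also tends to
   p \int |ubar|^p. *)

From HB Require Import structures.
From mathcomp Require Import all_boot all_order all_algebra.
From mathcomp Require Import all_classical all_reals all_analysis.
From mathcomp Require Import ring lra measurable_realfun.
Import Order.TTheory GRing.Theory Num.Theory.
Import numFieldNormedType.Exports.
Local Open Scope classical_set_scope.
Local Open Scope ring_scope.
Set Implicit Arguments. Unset Strict Implicit.

Section powR_inequalities.
Variable R : realType.
Implicit Types (x y a b w q p dl : R).

Lemma le0_ger_powR q x y : q <= 0 -> 0 < x -> x <= y -> y `^ q <= x `^ q.
Proof.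
move=> q0 x0 xy; have y0 : 0 < y := lt_le_trans x0 xy.
have powRNN z : z `^ q = (z `^ (- q))^-1 by rewrite -powRN opprK.
rewrite !powRNN lef_pV2 ?posrE ?powR_gt0 //.
by apply: (ge0_ler_powR _ (ltW x0) (ltW y0) xy); rewrite oppr_ge0.
Qed.

Lemma powR_subadditive p x y : 0 < p <= 1 -> 0 <= x -> 0 <= y ->
  (x + y) `^ p <= x `^ p + y `^ p.
Proof.
move=> /andP[p0 p1] x0 y0.
have [xy_eq0|xy_neq0] := eqVneq (x + y) 0.
  have [-> ->] : x = 0 /\ y = 0 by split; lra.
  by rewrite addr0 powR0 ?gt_eqF // addr0.
have xy_gt0 : 0 < x + y by rewrite lt_neqAle eq_sym xy_neq0 addr_ge0.
(* [z^p = z * z^(p-1) >= z * (x+y)^(p-1)], as [p - 1 <= 0] *)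
have le_part z : 0 <= z -> z <= x + y -> z * (x + y) `^ (p - 1) <= z `^ p.
  move=> z0 zs; have [->|zn0] := eqVneq z 0; first by rewrite mul0r powR0 ?gt_eqF.
  rewrite -(mulr_powRB1 z0 p0) ler_wpM2l // le0_ger_powR //; first lra.
  by rewrite lt_neqAle eq_sym zn0.
rewrite -(mulr_powRB1 (ltW xy_gt0) p0) mulrDl.
by apply: lerD; apply: le_part => //; lra.
Qed.

Lemma ler_dist_powR p a b : 0 < p <= 1 ->
  `| `|a| `^ p - `|b| `^ p | <= `|a - b| `^ p.
Proof.
move=> p01; have p0 : 0 <= p by case/andP: p01 => /ltW.
have half x y : `|x| `^ p <= `|x - y| `^ p + `|y| `^ p.
  apply: le_trans (powR_subadditive p01 (normr_ge0 _) (normr_ge0 _)).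
  apply: ge0_ler_powR; rewrite ?nnegrE ?addr_ge0 //.
  by rewrite -{1}(subrK y x) ler_normD.
have := half a b; have := half b a; rewrite distrC => h1 h2.
by rewrite ler_norml; apply/andP; split; lra.
Qed.

Lemma powR_sqr_half y q : (y ^+ 2) `^ (q / 2) = `|y| `^ q.
Proof.
rewrite -real_normK ?num_real // -powR_mulrn // -powRrM.
by rewrite mulrC mulfVK // pnatr_eq0.
Qed.

Lemma powR_sub2_mul q x : 0 < x -> x `^ q = x `^ (q - 2) * x ^+ 2.
Proof.
move=> x0; rewrite -powR_mulrn ?(ltW x0) // -powRD ?(gt_eqF x0) ?implybT //.
by rewrite subrK.
Qed.

(* Cutting at the level [dl]: for [|w| > dl] use [|w|^(p-2) <= dl^(p-2)]. *)
Lemma norm_powR_le_cut_sqr p dl w : 0 < dl -> 0 < p <= 2 ->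
  `|w| `^ p <= dl `^ p + dl `^ (p - 2) * w ^+ 2.
Proof.
move=> dl0 /andP[p0 p2].
have tail_ge0 : 0 <= dl `^ (p - 2) * w ^+ 2 by rewrite mulr_ge0 ?powR_ge0 ?sqr_ge0.
have [wdl|dlw] := leP `|w| dl.
  have := ge0_ler_powR (ltW p0) (normr_ge0 w) (ltW dl0) wdl.
  lra.
rewrite powR_sub2_mul ?(lt_trans dl0) // real_normK ?num_real //.
have : `|w| `^ (p - 2) * w ^+ 2 <= dl `^ (p - 2) * w ^+ 2.
  rewrite ler_wpM2r ?sqr_ge0 //; apply: le0_ger_powR => //; [lra | exact: ltW].
have := powR_ge0 dl p; lra.
Qed.

End powR_inequalities.

Section lam_density.
Variables (R : realType) (p : R).
Hypothesis p_gt0 : 0 < p.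

Definition lam_density (e y : R) : R := 2 * y * dpsi p e (y ^+ 2) * y.

(* Above the threshold [y^2 >= e^2] the density is exactly [p |y|^p]; below it
   both [lam_density e y] and [p |y|^p] lie in [[0, p e^p]]. *)
Lemma lam_density_approx e y : 0 < e ->
  `|lam_density e y - p * `|y| `^ p| <= p * e `^ p.
Proof.
move=> e0; rewrite /lam_density /dpsi.
case: ltP => [ye|ey].
  have y_lt : `|y| < e.
    by rewrite -ltr_sqr ?nnegrE ?normr_ge0 ?(ltW e0) // real_normK ?num_real.
  have -> : 2 * y * (p / 2 * e `^ (p - 2)) * y = p * (e `^ (p - 2) * y ^+ 2) by field.
  have low : 0 <= e `^ (p - 2) * y ^+ 2 <= e `^ p.
    rewrite mulr_ge0 ?powR_ge0 ?sqr_ge0 //=.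
    rewrite [leRHS](powR_sub2_mul _ e0).
    by rewrite ler_wpM2l ?powR_ge0 // ltW.
  have abs : 0 <= `|y| `^ p <= e `^ p.
    by rewrite powR_ge0 /= (ge0_ler_powR (ltW p_gt0) (normr_ge0 y) (ltW e0) (ltW y_lt)).
  move: low abs => /andP[l1 l2] /andP[a1 a2].
  rewrite -mulrBr normrM gtr0_norm // ler_pM2l // ler_norml.
  by apply/andP; split; lra.
suff -> : 2 * y * (p / 2 * (y ^+ 2) `^ ((p - 2) / 2)) * y = p * `|y| `^ p.
  by rewrite subrr normr0 mulr_ge0 ?powR_ge0 // ltW.
rewrite -powR_sqr_half -[in RHS](mulr_powRB1 (sqr_ge0 y)) ?divr_gt0 //.
have -> : p / 2 - 1 = (p - 2) / 2 by field.
by rewrite expr2; field.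
Qed.

Lemma lam_density_le e y : 0 < e -> p <= 2 ->
  `|lam_density e y| <= p * e `^ p + p + p * y ^+ 2.
Proof.
move=> e0 p2; have approx := lam_density_approx y e0.
have cut := norm_powR_le_cut_sqr y ltr01 (introT andP (conj p_gt0 p2)).
rewrite powR1 mul1r in cut.
have pcut : p * `|y| `^ p <= p + p * y ^+ 2 by rewrite -[p in p + _]mulr1 -mulrDr ler_pM2l.
have := ler_normD (lam_density e y - p * `|y| `^ p) (p * `|y| `^ p).
rewrite subrK [`|p * _|]ger0_norm ?mulr_ge0 ?powR_ge0 ?(ltW p_gt0) //.
lra.
Qed.

Lemma lam_density_dist_le e dl a b : 0 < e -> 0 < dl -> p <= 1 ->
  `|lam_density e a - p * `|b| `^ p|
    <= p * e `^ p + p * dl `^ p + p * dl `^ (p - 2) * (a - b) ^+ 2.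
Proof.
move=> e0 dl0 p1; have p01 : 0 < p <= 1 by rewrite p_gt0.
have approx := lam_density_approx a e0.
have dist : p * `| `|a| `^ p - `|b| `^ p| <= p * (dl `^ p + dl `^ (p - 2) * (a - b) ^+ 2).
  rewrite ler_pM2l //; apply: le_trans (ler_dist_powR a b p01) _.
  by apply: norm_powR_le_cut_sqr; rewrite // p_gt0 /=; lra.
have := ler_normD (lam_density e a - p * `|a| `^ p) (p * (`|a| `^ p - `|b| `^ p)).
rewrite normrM gtr0_norm // mulrBr addrA subrK.
lra.
Qed.

Lemma measurable_lam_density e : measurable_fun setT (lam_density e).
Proof.
apply: measurable_funM => //; apply: measurable_funM => //.
apply: (measurableT_comp _ (exprn_measurable 2)).
apply: measurable_fun_ifT => //.
- exact: measurable_fun_ltr.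
- exact: measurable_funM.
Qed.

End lam_density.

Section finite_measure_set.
Context d (T : measurableType d) (R : realType).
Variables (mu : {measure set T -> \bar R}) (D : set T).
Hypotheses (mD : measurable D) (muD : (mu D < +oo)%E).

Local Notation sq_integrable f := (mu.-integrable D (fun x => (f x ^+ 2)%:E)).

Lemma integrable_cst_fin (k : R) : mu.-integrable D (EFin \o cst k).
Proof.
apply/integrableP; split; first exact/measurable_EFinP.
rewrite (eq_integral (cst `|k|%:E)) // integral_cst //.
exact: lte_mul_pinfty.
Qed.

Lemma integrable_cst_add_sqr (c k : R) (f : T -> R) : sq_integrable f ->
  mu.-integrable D (EFin \o (fun x => c + k * f x ^+ 2)).
Proof.
move=> f2; rewrite [_ \o _](_ : _ = (EFin \o cst c) \+ (fun x => k%:E * (f x ^+ 2)%:E))%E.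
  by apply: (integrableD mD (integrable_cst_fin c)); exact: integrableZl.
by apply/funext => x /=; rewrite EFinD EFinM.
Qed.

Lemma integrable_le_cst_add_sqr (g f : T -> R) (c k : R) :
  measurable_fun D g -> sq_integrable f ->
  (forall x, D x -> `|g x| <= c + k * f x ^+ 2) -> mu.-integrable D (EFin \o g).
Proof.
move=> mg f2 gle; apply: (le_integrable mD _ _ (integrable_cst_add_sqr c k f2)).
  exact/measurable_EFinP.
by move=> x Dx; rewrite lee_fin (le_trans (gle x Dx)) ?ler_norm.
Qed.

Lemma integrable_sqrB (a b : T -> R) : measurable_fun D a -> measurable_fun D b ->
  sq_integrable a -> sq_integrable b -> sq_integrable (fun x => a x - b x).
Proof.
move=> ma mb a2 b2.
have ab2 : mu.-integrable D (fun x => (2 * a x ^+ 2 + 2 * b x ^+ 2)%:E).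
  under eq_fun do rewrite EFinD !EFinM.
  by apply: integrableD => //; exact: integrableZl.
apply: (le_integrable mD _ _ ab2).
  by apply/measurable_EFinP/measurable_funX/measurable_funB.
move=> x _; rewrite lee_fin !ger0_norm ?sqr_ge0 //; last first.
  by rewrite addr_ge0 // mulr_ge0 // sqr_ge0.
by have := sqr_ge0 (a x + b x); nra.
Qed.

Variable p : R.
Hypothesis p01 : 0 < p <= 1.

Lemma integral_lam_density_estimate (e dl : R) (a b : T -> R) : 0 < e -> 0 < dl ->
  measurable_fun D a -> measurable_fun D b -> sq_integrable a -> sq_integrable b ->
  `|\int[mu]_(x in D) lam_density p e (a x) - p * \int[mu]_(x in D) `|b x| `^ p|
    <= (p * e `^ p + p * dl `^ p) * fine (mu D)
       + p * dl `^ (p - 2) * \int[mu]_(x in D) ((a x - b x) ^+ 2).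
Proof.
move=> e0 dl0 ma mb a2 b2; case/andP: p01 => p0 p1; have p2 : p <= 2 by lra.
have ab2 := integrable_sqrB ma mb a2 b2.
have mh : measurable_fun D (fun x => lam_density p e (a x)).
  exact: measurableT_comp (measurable_lam_density p e) ma.
have mbp : measurable_fun D (fun x => `|b x| `^ p).
  by apply: (measurableT_comp (measurable_powR _)); exact: measurableT_comp.
have bp_le (k : R) x : 0 <= k -> `|k * `|b x| `^ p| <= k + k * b x ^+ 2.
  move=> k0; rewrite ger0_norm ?mulr_ge0 ?powR_ge0 // -{2}[k]mulr1 -mulrDr.
  rewrite ler_wpM2l //; have := norm_powR_le_cut_sqr (b x) ltr01 (introT andP (conj p0 p2)).
  by rewrite !powR1 mul1r.
have ih : mu.-integrable D (EFin \o (fun x => lam_density p e (a x))).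
  apply: (integrable_le_cst_add_sqr (c := p * e `^ p + p) (k := p) mh a2) => x _.
  exact: lam_density_le.
have ib : mu.-integrable D (EFin \o (fun x => `|b x| `^ p)).
  apply: (integrable_le_cst_add_sqr (c := 1) (k := 1) mbp b2) => x _.
  by have := bp_le 1 x ler01; rewrite mul1r.
have ipb : mu.-integrable D (EFin \o (fun x => p * `|b x| `^ p)).
  apply: (integrable_le_cst_add_sqr _ b2 (fun x _ => bp_le p x (ltW p0))).
  exact: measurable_funM.
have mdiff : measurable_fun D (fun x => lam_density p e (a x) - p * `|b x| `^ p).
  by apply: measurable_funB => //; exact: measurable_funM.
have idiff : mu.-integrable D (EFin \o (fun x => lam_density p e (a x) - p * `|b x| `^ p)).
  apply: (integrable_le_cst_add_sqr (c := p * e `^ p + p * dl `^ p)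
    (k := p * dl `^ (p - 2)) mdiff ab2) => x _.
  exact: lam_density_dist_le.
have inorm : mu.-integrable D
    (EFin \o (fun x => `|lam_density p e (a x) - p * `|b x| `^ p|)).
  apply: (integrable_le_cst_add_sqr (c := p * e `^ p + p * dl `^ p)
    (k := p * dl `^ (p - 2)) _ ab2) => [|x _].
    exact: measurableT_comp.
  by rewrite normr_id; exact: lam_density_dist_le.
rewrite -RintegralZl // -RintegralB //.
apply: le_trans (le_normr_Rintegral mD idiff) _.
apply: le_trans (le_Rintegral mD inorm (integrable_cst_add_sqr _ _ ab2)
  (fun x _ => lam_density_dist_le p0 (a x) (b x) e0 dl0 p1)) _.
rewrite RintegralD //; last 2 first.
- exact: integrable_cst_fin.
- under [X in _.-integrable _ X]eq_fun do rewrite EFinM.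
  exact: integrableZl.
by rewrite Rintegral_cst // RintegralZl.
Qed.

Lemma integral_lam_density_cvg (eps : nat -> R) (a : nat -> T -> R) (b : T -> R) :
  (forall k, 0 < eps k) -> eps @ \oo --> 0 ->
  (forall k, measurable_fun D (a k)) -> (forall k, sq_integrable (a k)) ->
  measurable_fun D b -> sq_integrable b ->
  (fun k => \int[mu]_(x in D) ((a k x - b x) ^+ 2)) @ \oo --> 0 ->
  (fun k => \int[mu]_(x in D) lam_density p (eps k) (a k x))
    @ \oo --> p * \int[mu]_(x in D) `|b x| `^ p.
Proof.
move=> eps0 eps_cvg ma a2 mb b2 dist_cvg; case/andP: p01 => p0 p1.
apply/cvgrPdist_le => r r0.
pose m := fine (mu D); have m0 : 0 <= m by rewrite fine_ge0 // measure_ge0.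
(* With [dl^p = t] the [dl]-part of the error is at most [r / 3]. *)
pose t := r / (3 * p * (m + 1)).
have t0 : 0 < t by rewrite divr_gt0 // !mulr_gt0 //; lra.
have ptm : p * t * m <= r / 3.
  have -> : r / 3 = p * t * (m + 1) by rewrite /t; field; apply/andP; split; lra.
  by rewrite ler_pM2l ?lerDl // mulr_gt0.
pose dl := t `^ p^-1; have dl0 : 0 < dl by exact: powR_gt0.
have dlp : dl `^ p = t by rewrite -powRrM mulVf ?gt_eqF // powRr1 // ltW.
pose K := p * dl `^ (p - 2); have K0 : 0 < K by rewrite mulr_gt0 // powR_gt0.
have rK : 0 < r / 3 / K by rewrite !divr_gt0.
near=> k.
have eps_le : p * eps k `^ p <= p * t.
  rewrite ler_pM2l // -dlp; apply: (ge0_ler_powR (ltW p0));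
    rewrite ?nnegrE ?(ltW (eps0 k)) ?(ltW dl0) //.
  near: k; apply: filterS ((cvgr0Pnorm_le _).1 eps_cvg _ dl0) => k.
  by rewrite ger0_norm // ltW.
have dist_le : K * \int[mu]_(x in D) ((a k x - b x) ^+ 2) <= r / 3.
  near: k; apply: filterS ((cvgr0Pnorm_le _).1 dist_cvg _ rK) => k.
  by move=> /(le_trans (ler_norm _)); rewrite ler_pdivlMr // mulrC.
rewrite distrC; apply: le_trans (integral_lam_density_estimate (eps0 k) dl0
  (ma k) mb (a2 k) b2) _.
rewrite dlp -/m -/K; nra.
Unshelve. all: by end_near.
Qed.

End finite_measure_set.

Section inner_product.
Variables (R : realType) (V : lmodType R) (ip : V -> V -> R).
Hypothesis ipH : is_hilbert ip.

Lemma ipDl u v w : ip (u + v) w = ip u w + ip v w.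
Proof. by case: ipH => _ [ipZDl _]; rewrite -{1}(scale1r u) ipZDl mul1r. Qed.

Lemma ip0l w : ip 0 w = 0.
Proof. by have := ipDl 0 0 w; rewrite addr0; lra. Qed.

Lemma ipNl u w : ip (- u) w = - ip u w.
Proof.
case: ipH => _ [ipZDl _].
by rewrite -scaleN1r -[_ *: u]addr0 ipZDl ip0l mulN1r addr0.
Qed.

Lemma ip_ge0 v : 0 <= ip v v.
Proof.
case: ipH => _ [_ [ip_gt0 _]]; have [->|v0] := eqVneq v 0; first by rewrite ip0l.
exact/ltW/ip_gt0.
Qed.

Lemma vnorm_ge0 v : 0 <= vnorm ip v.
Proof. exact: sqrtr_ge0. Qed.

Lemma vnorm_sqr v : vnorm ip v ^+ 2 = ip v v.
Proof. by rewrite sqr_sqrtr // ip_ge0. Qed.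

Lemma ip_parallelogram x y :
  ip (x + y) (x + y) + ip (x - y) (x - y) = 2 * ip x x + 2 * ip y y.
Proof.
case: ipH => ipC _.
rewrite !ipDl !ipNl (ipC x (x + y)) (ipC y (x + y)) (ipC x (x - y)) (ipC y (x - y)).
by rewrite !ipDl !ipNl (ipC x y); ring.
Qed.

Lemma vnormD_sqr_le x y :
  vnorm ip (x + y) ^+ 2 <= 2 * vnorm ip x ^+ 2 + 2 * vnorm ip y ^+ 2.
Proof. by rewrite !vnorm_sqr -ip_parallelogram lerDl ip_ge0. Qed.

Lemma in_dualB (f : V -> R) u v : in_dual ip f -> f (u - v) = f u - f v.
Proof. by case=> flin _; rewrite addrC -scaleN1r flin mulN1r addrC. Qed.

Lemma dual_cvg_apply (f : nat -> V -> R) (g : V -> R) (u : nat -> V) (ubar : V) :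
  in_dual ip g -> dual_cvg ip f g -> (fun k => vnorm ip (u k - ubar)) @ \oo --> 0 ->
  (fun k => f k (u k)) @ \oo --> g ubar.
Proof.
move=> gdual fg u_cvg; have [_ [C gC]] := gdual.
apply/cvgrPdist_le => r r0.
(* [B] bounds [vnorm ip (u k)] as soon as [vnorm ip (u k - ubar) <= 1]. *)
pose B := 1 + 2 * (1 + vnorm ip ubar ^+ 2); have B0 : 0 < B.
  by rewrite /B; have := sqr_ge0 (vnorm ip ubar); lra.
have C1 : 0 < `|C| + 1 by have := normr_ge0 C; lra.
pose s := Num.min 1 (r / 2 / (`|C| + 1)).
have s0 : 0 < s by rewrite lt_min ltr01 !divr_gt0.
have [N fN] := fg _ (divr_gt0 (divr_gt0 r0 (ltr0Sn _ 1)) B0).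
near=> k.
have uk_near : vnorm ip (u k - ubar) <= s.
  near: k; apply: filterS ((cvgr0Pnorm_le _).1 u_cvg _ s0) => k.
  by rewrite ger0_norm // vnorm_ge0.
move: uk_near; rewrite le_min => /andP[uk1 ukC].
have ukB : vnorm ip (u k) <= B.
  have := vnormD_sqr_le (u k - ubar) ubar; rewrite subrK.
  have := vnorm_ge0 (u k - ubar); have := vnorm_ge0 (u k); rewrite /B; nra.
have fk : `|f k (u k) - g (u k)| <= r / 2.
  apply: le_trans (fN k _ (u k)) _; first by near: k; exact: nbhs_infty_ge.
  by rewrite -[leRHS](divfK (lt0r_neq0 B0)) ler_wpM2l // ltW // !divr_gt0.
have gk : `|g (u k) - g ubar| <= r / 2.
  rewrite -(in_dualB _ _ gdual); apply: le_trans (gC _) _.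
  apply: le_trans (_ : (`|C| + 1) * vnorm ip (u k - ubar) <= _).
    by rewrite ler_wpM2r ?vnorm_ge0 //; have := ler_norm C; lra.
  by rewrite -ler_pdivlMl // mulrC.
rewrite distrC; have := ler_normD (f k (u k) - g (u k)) (g (u k) - g ubar).
rewrite addrA subrK; lra.
Unshelve. all: by end_near.
Qed.

End inner_product.

Section euclidean_domain.
Variables (R : realType) (d : nat).

Lemma box_measurable (a b : 'rV[R]_d) : measurable (box a b : set (Rd R d)).
Proof. by apply: sub_sigma_algebra; exists a => //; exists b. Qed.

Lemma ball_rV (x y : 'rV[R]_d) (e : R) : 0 < e ->
  (forall i, `|x ord0 i - y ord0 i| < e) -> ball x e y.
Proof. by move=> e0 xy; split => // i j; rewrite (ord1 i); exact: xy. Qed.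

Lemma normr_coord_le (v : 'rV[R]_d) i : `|v ord0 i| <= `|v|.
Proof.
have /mapP[j _ ->] : `|v ord0 i| \in [seq `|v x.1 x.2| | x : 'I_1 * 'I_d].
  by apply/mapP; exists (ord0, i) => //=; rewrite mem_enum.
by rewrite [leRHS]/Num.norm /= mx_normrE; apply/bigmax_geP; right => /=; exists j.
Qed.

(* An open set is the countable union of the boxes with rational corners it contains. *)
Lemma open_measurable_Rd (O : set (Rd R d)) : open (O : set 'rV[R]_d) -> measurable O.
Proof.
move=> oO.
pose G (q : 'rV[rat]_d * 'rV[rat]_d) : set (Rd R d) :=
  let B := box (map_mx ratr q.1) (map_mx ratr q.2) in
  if pselect (B `<=` O) is left _ then B else set0.
suff -> : O = \bigcup_q G q.
  apply: countable_bigcupT_measurable; first exact: countableP.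
  by move=> q; rewrite /G; case: pselect => _ //; exact: box_measurable.
apply/seteqP; split; last first.
  by move=> x [q _]; rewrite /G; case: pselect => [qO|//]; exact: qO.
move=> x Ox; have /nbhs_ballP[e /= e0 xeO] := oO x Ox.
have lo i : exists q : rat, ratr q \in `](x ord0 i - e), (x ord0 i)[.
  by apply: rat_in_itvoo; rewrite ltrBlDr ltrDl.
have hi i : exists q : rat, ratr q \in `](x ord0 i), (x ord0 i + e)[.
  by apply: rat_in_itvoo; rewrite ltrDl.
have [qa qaP] := choice lo; have [qb qbP] := choice hi.
have box_sub : box (map_mx ratr (\row_i qa i)) (map_mx ratr (\row_i qb i)) `<=` O.
  move=> y /= yab; apply: xeO; apply: ball_rV => // i.
  have := yab i; rewrite !mxE => /andP[y1 y2].
  move: (qaP i) (qbP i); rewrite !in_itv /= => /andP[a1 a2] /andP[b1 b2].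
  by rewrite ltr_norml; apply/andP; split; lra.
exists (\row_i qa i, \row_i qb i) => //; rewrite /G; case: pselect => // _ i.
move: (qaP i) (qbP i); rewrite !mxE !in_itv /= => /andP[_ a2] /andP[b1 _].
by rewrite a2 (ltW b1).
Qed.

Lemma bounded_lebesgue_lty (mu : {measure set (Rd R d) -> \bar R}) (O : set (Rd R d)) :
  is_lebesgue mu -> (exists M : R, forall x, O x -> `|x| <= M) -> measurable O ->
  (mu O < +oo)%E.
Proof.
move=> leb [M OM] mO.
pose a : 'rV[R]_d := const_mx (- (`|M| + 1)).
pose b : 'rV[R]_d := const_mx (`|M| + 1).
have Oab : O `<=` box a b.
  move=> x Ox i; rewrite !mxE.
  have := le_trans (normr_coord_le x i) (OM x Ox); rewrite ler_norml => /andP[x1 x2].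
  have := ler_norm M; have := ler_norm (- M); rewrite normrN.
  by move=> M1 M2; apply/andP; split; lra.
have ab i : a ord0 i <= b ord0 i by rewrite !mxE; have := normr_ge0 M; lra.
apply: (le_lt_trans (le_measure mu _ _ Oab)); rewrite ?inE //; first exact: box_measurable.
by have /= -> := leb a b ab; rewrite ltry.
Qed.

End euclidean_domain.


Theorem lemma5p5 (R : realType) (d : nat)
    (mu : {measure set (Rd R d) -> \bar R}) (O : set (Rd R d))
    (V : lmodType R) (ip : V -> V -> R) (iota : V -> Rd R d -> R)
    (F : V -> R) (alpha beta p : R)
    (ubar : V) (rho : R) (eps : nat -> R) (u : nat -> V) (lbar : V -> R) :
  is_lebesgue mu ->
  bounded_lipschitz_domain (O : set 'rV[R]_d) ->
  is_hilbert ip ->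
  compact_dense_embedding mu O ip iota ->
  weakly_lsc ip F -> bounded_below_affine ip F -> C1_frechet ip F ->
  0 < alpha -> 0 < beta -> 0 < p < 1 ->
  0 < rho ->
  local_solution mu O ip iota p F alpha beta ubar rho ->
  (forall k, 0 < eps k) -> eps @ \oo --> (0 : R) ->
  (forall k, reg_global_solution mu O ip iota p F alpha beta
               (eps k) ubar rho (u k)) ->
  (fun k => vnorm ip (u k - ubar)) @ \oo --> (0 : R) ->
  in_dual ip lbar ->
  dual_cvg ip (fun k => lam mu O iota p (eps k) (u k)) lbar ->
  (fun k => lam mu O iota p (eps k) (u k) (u k)) @ \oo --> lbar ubar /\
  lbar ubar = p * \int[mu]_(x in O) (`|iota ubar x| `^ p).
Proof.
move=> leb [oO [bO _]] ipH [iotaL2 [iota_lin [_ [[C iotaC] _]]]] _ _ _ _ _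
  /andP[p0 /ltW p1] _ _ eps0 eps_cvg _ u_cvg lbar_dual lam_cvg.
have mO := open_measurable_Rd oO.
have muO := bounded_lebesgue_lty leb bO mO.
have iotaB v w x : iota (v - w) x = iota v x - iota w x.
  by rewrite addrC -scaleN1r iota_lin mulN1r addrC.
have dist_cvg : (fun k => \int[mu]_(x in O) ((iota (u k) x - iota ubar x) ^+ 2))
    @ \oo --> 0.
  apply: (squeeze_cvgr (f := cst 0)
    (h := fun k => `|C| * (vnorm ip (u k - ubar) * vnorm ip (u k - ubar)))); last 2 first.
  - exact: cvg_cst.
  - by rewrite -(mulr0 `|C|) -(mulr0 0); apply: cvgM => //; [exact: cvg_cst | exact: cvgM].
  near=> k; rewrite Rintegral_ge0 /= => [|x _]; last exact: sqr_ge0.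
  have := iotaC (u k - ubar); rewrite /L2norm2 -expr2.
  under eq_Rintegral do rewrite iotaB.
  by move/le_trans; apply; rewrite ler_wpM2r ?sqr_ge0 ?ler_norm.
have lam_lim := integral_lam_density_cvg mO muO (introT andP (conj p0 p1)) eps0 eps_cvg
  (fun k => (iotaL2 (u k)).1) (fun k => (iotaL2 (u k)).2)
  (iotaL2 ubar).1 (iotaL2 ubar).2 dist_cvg.
have lbar_lim := dual_cvg_apply ipH lbar_dual lam_cvg u_cvg.
split => //.
exact: (cvg_unique _ lbar_lim lam_lim).
Unshelve. all: by end_near.
Qed.
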